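(* $\gamma^{L-LD}(\mathcal{S})=\frac15$ and $\gamma^{L-LD}(\mathcal{H})=\frac14$; that is, every local locating-dominating code in the square grid has density at least $1/5$ and some such code has density exactly $1/5$, and every local locating-dominating code in the hexagonal grid has density at least $1/4$ and some such code has density exactly $1/4$.
   Context: The square grid $\mathcal{S}$ has vertex set $\mathbb{Z}^2$, with $\mathbf{u},\mathbf{v}$ adjacent iff $\mathbf{u}-\mathbf{v}\in\{(\pm1,0),(0,\pm1)\}$. The hexagonal grid $\mathcal{H}$ has vertex set $\mathbb{Z}^2$, with $\mathbf{u}=(i,j)$ and $\mathbf{v}$ adjacent iff $\mathbf{u}-\mathbf{v}\in\{(\pm1,0),(0,(-1)^{i+j+1})\}$. For a nonempty $C\subseteq\mathbb{Z}^2$ and vertex $\mathbf{u}$, $I(\mathbf{u})=N[\mathbf{u}]\cap C$ where $N[\mathbf{u}]$ is the closed neighbourhood. $C$ is a covering code if $I(\mathbf{u})\ne\emptyset$ for all $\mathbf{u}$; a local locating-dominating code if it is covering and $I(\mathbf{u})\ne I(\mathbf{v})$ for all adjacent $\mathbf{u},\mathbf{v}\notin C$. The density of $C$ is $D(C)=\limsup_{n\to\infty}|C\cap Q_n|/|Q_n|$ with $Q_n=\{(i,j)\in\mathbb{Z}^2:|i|\le n,|j|\le n\}$. $\gamma^{L-LD}(G)$ denotes the smallest density of a local locating-dominating code in $G$. *)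

From Stdlib Require Import ZArith Reals List.
From Coquelicot Require Import Coquelicot.
Import ListNotations.

Definition vertex := (Z * Z)%type.

Definition graph := vertex -> vertex -> Prop.

Definition square_grid : graph := fun u v =>
  let d := ((fst u - fst v)%Z, (snd u - snd v)%Z) in
  d = (1%Z, 0%Z) \/ d = ((-1)%Z, 0%Z) \/ d = (0%Z, 1%Z) \/ d = (0%Z, (-1)%Z).

Definition sign_pow (k : Z) : Z := if Z.even k then 1%Z else (-1)%Z.

Definition hex_grid : graph := fun u v =>
  let d := ((fst u - fst v)%Z, (snd u - snd v)%Z) in
  d = (1%Z, 0%Z) \/ d = ((-1)%Z, 0%Z) \/
  d = (0%Z, sign_pow (fst u + snd u + 1)%Z).

Definition code := vertex -> bool.

Definition closed_nbhd (G : graph) (u w : vertex) : Prop := w = u \/ G u w.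

Definition I_set (G : graph) (C : code) (u : vertex) : vertex -> Prop :=
  fun w => closed_nbhd G u w /\ C w = true.

Definition nonempty_code (C : code) : Prop := exists w, C w = true.

Definition covering_code (G : graph) (C : code) : Prop :=
  nonempty_code C /\ forall u, exists w, I_set G C u w.

Definition I_differ (G : graph) (C : code) (u v : vertex) : Prop :=
  ~ (forall w, I_set G C u w <-> I_set G C v w).

Definition local_LD_code (G : graph) (C : code) : Prop :=
  covering_code G C /\
  forall u v, G u v -> C u = false -> C v = false -> I_differ G C u v.

Definition Zrange (n : nat) : list Z :=
  map (fun k => (Z.of_nat k - Z.of_nat n)%Z) (seq 0 (2 * n + 1)).

Definition Q (n : nat) : list vertex := list_prod (Zrange n) (Zrange n).

Definition density_ratio (C : code) (n : nat) : R :=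
  INR (length (filter C (Q n))) / INR (length (Q n)).

Definition density (C : code) : Rbar := LimSup_seq (density_ratio C).

From Stdlib Require Import ZArith Reals List FinFun Lia Lra.
From Coquelicot Require Import Coquelicot.
Import ListNotations.

(* Both grids are triangle-free (adjacent vertices have coordinate sums of
   different parity), so every covering code is automatically a local
   locating-dominating code: two adjacent non-codewords cannot share a
   codeword neighbour.  Hence the optimal density is the optimal covering
   density.  Each closed neighbourhood N[u] has exactly k vertices (k = 5,
   resp. 4), all within the 3x3 box around u, so by double counting in the
   boxes Q_n:
   - a covering code C satisfies |Q_n| <= k |C ∩ Q_(n+1)|, hence D(C) >= 1/k;
   - a code whose closed neighbourhoods are pairwise disjoint satisfies
     k |C ∩ Q_n| <= |Q_(n+1)|, hence D(C) <= 1/k,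
   because |Q_(n+1)| / |Q_n| -> 1.  Such a perfect code exists: the values
   i + 2j mod k on every N[u] form a complete residue system, so the
   vertices with i + 2j = 0 (mod k) meet every N[u] exactly once. *)

Lemma NoDup_flat_map {A B} (f : A -> list B) (l : list A) :
  NoDup l -> (forall x, In x l -> NoDup (f x)) ->
  (forall x y b, In x l -> In y l -> In b (f x) -> In b (f y) -> x = y) ->
  NoDup (flat_map f l).
Proof.
  induction 1 as [|a l Ha Hl IH]; intros Hf Hdisj; simpl; [constructor|].
  apply NoDup_app.
  - apply Hf; left; reflexivity.
  - apply IH; [intros; apply Hf | intros; eapply Hdisj]; simpl; eauto.
  - intros b Hb Hb'. apply in_flat_map in Hb' as [y [Hy Hby]].
    assert (a = y) as <- by (eapply Hdisj; simpl; eauto). contradiction.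
Qed.

Lemma NoDup_map_inj_in {A B} (f : A -> B) (l : list A) :
  NoDup (map f l) -> forall x y, In x l -> In y l -> f x = f y -> x = y.
Proof.
  induction l as [|a l IH]; simpl; intros Hnd x y Hx Hy Hxy; [contradiction|].
  inversion Hnd as [|? ? Hfa Hrest]; subst.
  destruct Hx as [<-|Hx], Hy as [<-|Hy]; auto.
  - exfalso; apply Hfa. rewrite Hxy. now apply in_map.
  - exfalso; apply Hfa. rewrite <- Hxy. now apply in_map.
Qed.

Lemma in_Zrange n z : In z (Zrange n) <-> (- Z.of_nat n <= z <= Z.of_nat n)%Z.
Proof.
  unfold Zrange; rewrite in_map_iff; split.
  - intros [k [<- Hk]]. apply in_seq in Hk. lia.
  - intros Hz. exists (Z.to_nat (z + Z.of_nat n)). split.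
    + lia.
    + apply in_seq. lia.
Qed.

Lemma NoDup_Zrange n : NoDup (Zrange n).
Proof. apply Injective_map_NoDup; [intros x y E; lia | apply seq_NoDup]. Qed.

Lemma in_Q n a b : In (a, b) (Q n) <->
  ((- Z.of_nat n <= a <= Z.of_nat n) /\ (- Z.of_nat n <= b <= Z.of_nat n))%Z.
Proof. unfold Q. rewrite in_prod_iff, !in_Zrange. tauto. Qed.

Lemma NoDup_Q n : NoDup (Q n).
Proof.
  assert (Hprod : forall l l' : list Z,
    list_prod l l' = flat_map (fun a => map (pair a) l') l).
  { induction l as [|a l IH]; intros l'; simpl; [reflexivity | now rewrite IH]. }
  unfold Q; rewrite Hprod. apply NoDup_flat_map; [apply NoDup_Zrange| |].
  - intros a _. apply Injective_map_NoDup; [intros x y E; now injection E|].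
    apply NoDup_Zrange.
  - intros a a' v _ _ Hv Hv'. apply in_map_iff in Hv as [b [<- _]].
    apply in_map_iff in Hv' as [b' [E _]]. now injection E.
Qed.

Lemma length_Q n : length (Q n) = ((2 * n + 1) * (2 * n + 1))%nat.
Proof.
  unfold Q, Zrange. now rewrite (length_prod (A := Z) (B := Z)), length_map, length_seq.
Qed.

Definition near (u w : vertex) : Prop :=
  (Z.abs (fst w - fst u) <= 1 /\ Z.abs (snd w - snd u) <= 1)%Z.

Lemma near_Q n u w : In u (Q n) -> near u w -> In w (Q (S n)).
Proof. destruct u as [a b], w as [c d]; unfold near; cbn [fst snd]. rewrite !in_Q. lia. Qed.

Definition box_size (n : nat) : R := INR (length (Q n)).

Lemma box_size_eq n : box_size n = (2 * INR n + 1) ^ 2.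
Proof.
  unfold box_size. rewrite length_Q, mult_INR, plus_INR, mult_INR. simpl. ring.
Qed.

Lemma box_size_pos n : 0 < box_size n.
Proof. rewrite box_size_eq. pose proof (pos_INR n). nra. Qed.

Lemma box_growth : is_lim_seq (fun n => box_size (S n) / box_size n) 1.
Proof.
  apply is_lim_seq_le_le with (u := fun _ => 1) (w := fun n => 1 + 8 * / INR (S n)).
  - intros n. pose proof (box_size_pos n) as Hq.
    split; [rewrite <- Rle_div_r | rewrite Rle_div_l]; try exact Hq;
      rewrite !box_size_eq, S_INR; pose proof (pos_INR n) as Hx; [nra|].
    assert (Hinv : / (INR n + 1) * (INR n + 1) = 1) by (field; lra).
    assert (0 <= / (INR n + 1) * (3 * INR n ^ 2 + 2 * INR n)).
    { apply Rmult_le_pos; [left; apply Rinv_0_lt_compat|]; nra. }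
    nra.
  - apply is_lim_seq_const.
  - replace (Finite 1) with (Finite (1 + 8 * 0)) by (f_equal; ring).
    apply is_lim_seq_plus'; [apply is_lim_seq_const|].
    apply (is_lim_seq_scal_l _ 8 0).
    apply (is_lim_seq_inv _ p_infty); [|discriminate].
    apply (is_lim_seq_incr_1 INR), is_lim_seq_INR.
Qed.

Lemma LimSup_seq_shift (u : nat -> R) :
  LimSup_seq (fun n => u (S n)) = LimSup_seq u.
Proof.
  destruct (ex_LimSup_seq u) as [l Hl].
  rewrite (is_LimSup_seq_unique _ _ Hl).
  apply is_LimSup_seq_unique, (is_LimSup_seq_ind_1 u l), Hl.
Qed.

Lemma LimSup_seq_lim (u : nat -> R) (l : Rbar) :
  is_lim_seq u l -> LimSup_seq u = l.
Proof. intros Hu. now apply is_LimSup_seq_unique, is_lim_LimSup_seq. Qed.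

Lemma density_ge_of_count (C : code) (k : nat) : (0 < k)%nat ->
  (forall n, (length (Q n) <= k * length (filter C (Q (S n))))%nat) ->
  Rbar_le (1 / INR k) (density C).
Proof.
  intros Hk Hcount. set (K := INR k).
  assert (HK : 0 < K) by (apply lt_0_INR; exact Hk).
  unfold density. rewrite <- LimSup_seq_shift.
  rewrite <- (LimSup_seq_lim (fun n => / (K * (box_size (S n) / box_size n))) (1 / K)).
  - apply LimSup_le. exists O. intros n _. unfold density_ratio. fold (box_size (S n)).
    pose proof (box_size_pos n). pose proof (box_size_pos (S n)).
    specialize (Hcount n). apply le_INR in Hcount. rewrite mult_INR in Hcount.
    fold (box_size n) K in Hcount.
    replace (/ (K * (box_size (S n) / box_size n)))
      with (box_size n / (K * box_size (S n))) by (field; lra).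
    rewrite Rle_div_l by nra.
    replace (INR (length (filter C (Q (S n)))) / box_size (S n) * (K * box_size (S n)))
      with (K * INR (length (filter C (Q (S n))))) by (field; lra).
    exact Hcount.
  - replace (1 / K) with (/ K) by (field; lra).
    apply (is_lim_seq_inv _ K).
    + replace (Finite K) with (Finite (K * 1)) by (f_equal; ring).
      apply (is_lim_seq_scal_l _ K 1), box_growth.
    + intros E; injection E; lra.
Qed.

Lemma density_le_of_count (C : code) (k : nat) : (0 < k)%nat ->
  (forall n, (k * length (filter C (Q n)) <= length (Q (S n)))%nat) ->
  Rbar_le (density C) (1 / INR k).
Proof.
  intros Hk Hcount. set (K := INR k).
  assert (HK : 0 < K) by (apply lt_0_INR; exact Hk).
  unfold density.
  rewrite <- (LimSup_seq_lim (fun n => / K * (box_size (S n) / box_size n)) (1 / K)).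
  - apply LimSup_le. exists O. intros n _. unfold density_ratio. fold (box_size n).
    pose proof (box_size_pos n). pose proof (box_size_pos (S n)).
    specialize (Hcount n). apply le_INR in Hcount. rewrite mult_INR in Hcount.
    fold (box_size (S n)) K in Hcount.
    rewrite Rle_div_l by lra.
    replace (/ K * (box_size (S n) / box_size n) * box_size n)
      with (box_size (S n) / K) by (field; lra).
    rewrite <- Rle_div_r by lra. lra.
  - replace (1 / K) with (/ K * 1) by (field; lra).
    apply (is_lim_seq_scal_l _ (/ K) 1), box_growth.
Qed.

Definition triangle_free (G : graph) : Prop :=
  forall u v w, G u v -> G u w -> G v w -> False.

(* In a triangle-free graph every covering code is local locating-dominating:
   a codeword in I(u) = I(v) would differ from u and v and close a triangle. *)
Lemma covering_triangle_free_LLD (G : graph) (C : code) :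
  triangle_free G -> covering_code G C -> local_LD_code G C.
Proof.
  intros Htri Hcov. split; [exact Hcov|]. intros u v Guv Cu Cv Hsame.
  destruct Hcov as [_ Hcov]. destruct (Hcov u) as [w Hw].
  pose proof (proj1 (Hsame w) Hw) as Hw'.
  destruct Hw as [[->|Guw] Cw]; [congruence|].
  destruct Hw' as [[->|Gvw] _]; [congruence|].
  exact (Htri u v w Guv Guw Gvw).
Qed.

Definition parity (u : vertex) : bool := Z.even (fst u + snd u).

Lemma parity_triangle_free (G : graph) :
  (forall u v, G u v -> parity u <> parity v) -> triangle_free G.
Proof.
  intros Hbip u v w Guv Guw Gvw. apply Hbip in Guv, Guw, Gvw.
  destruct (parity u), (parity v), (parity w); congruence.
Qed.

Lemma parity_unit_step (x y : Z) : (x - y = 1 \/ x - y = -1)%Z -> Z.even x <> Z.even y.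
Proof.
  intros Hxy. replace x with (y + (x - y))%Z by ring.
  destruct Hxy as [-> | ->]; rewrite Z.even_add; destruct (Z.even y); discriminate.
Qed.

Lemma complete_residues_hit_zero {A} (f : A -> Z) (m : nat) (l : list A) :
  (0 < m)%nat -> length l = m -> NoDup (map (fun a => (f a mod Z.of_nat m)%Z) l) ->
  exists a, In a l /\ (f a mod Z.of_nat m = 0)%Z.
Proof.
  intros Hm Hlen Hnd.
  destruct (in_dec Z.eq_dec 0%Z (map (fun a => (f a mod Z.of_nat m)%Z) l)) as [Hin|Hout].
  - apply in_map_iff in Hin as [a [Ha Hl]]. eauto.
  - exfalso.
    assert (Hincl : incl (map (fun a => (f a mod Z.of_nat m)%Z) l)
                         (map Z.of_nat (seq 1 (m - 1)))).
    { intros r Hr. pose proof Hr as Hr'. apply in_map_iff in Hr' as [a [<- _]].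
      pose proof (Z.mod_pos_bound (f a) (Z.of_nat m) ltac:(lia)).
      assert (f a mod Z.of_nat m <> 0)%Z by (intros E; rewrite E in Hr; contradiction).
      apply in_map_iff. exists (Z.to_nat (f a mod Z.of_nat m)).
      split; [lia | apply in_seq; lia]. }
    apply NoDup_incl_length in Hincl; [|exact Hnd].
    rewrite !length_map, length_seq in Hincl. lia.
Qed.

Lemma shifted_residues_nodup (m x : Z) (ds : list Z) : (0 < m)%Z ->
  NoDup (map (fun d => d mod m)%Z ds) -> NoDup (map (fun d => (x + d) mod m)%Z ds).
Proof.
  intros Hm Hnd.
  assert (Hrecover : forall r, (0 <= r < m)%Z -> r = (((x + r) mod m - x) mod m)%Z).
  { intros r Hr. rewrite Zminus_mod_idemp_l. replace (x + r - x)%Z with r by ring.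
    symmetry. now apply Z.mod_small. }
  replace (map (fun d => (x + d) mod m)%Z ds)
    with (map (fun r => (x + r) mod m)%Z (map (fun d => d mod m)%Z ds)).
  2: { rewrite map_map. apply map_ext. intros d. apply Zplus_mod_idemp_r. }
  apply Injective_map_NoDup_in; [|exact Hnd].
  intros r r' Hr Hr' E.
  apply in_map_iff in Hr as [d [<- _]], Hr' as [d' [<- _]].
  rewrite (Hrecover (d mod m)%Z), (Hrecover (d' mod m)%Z), E by (apply Z.mod_pos_bound; lia).
  reflexivity.
Qed.

Section NeighbourhoodLists.

Variables (G : graph) (N : vertex -> list vertex) (k : nat).
Hypothesis N_spec : forall u w, closed_nbhd G u w <-> In w (N u).
Hypothesis N_nodup : forall u, NoDup (N u).
Hypothesis N_length : forall u, length (N u) = k.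
Hypothesis N_near : forall u w, In w (N u) -> near u w.
Hypothesis G_sym : forall u v, G u v -> G v u.
Hypothesis k_pos : (0 < k)%nat.
Hypothesis G_bipartite : forall u v, G u v -> parity u <> parity v.

Lemma N_sym u w : In w (N u) -> In u (N w).
Proof.
  rewrite <- !N_spec. intros [->|Guw]; [left | right; apply G_sym]; auto.
Qed.

Lemma codeword_nbhds_length (C : code) n :
  length (flat_map N (filter C (Q n))) = (length (filter C (Q n)) * k)%nat.
Proof. apply flat_map_constant_length. intros u _. apply N_length. Qed.

(* Q_n is covered by the neighbourhoods of the codewords in Q_(n+1). *)
Lemma covering_count (C : code) : covering_code G C ->
  forall n, (length (Q n) <= k * length (filter C (Q (S n))))%nat.
Proof.
  intros [_ Hcov] n. rewrite Nat.mul_comm, <- codeword_nbhds_length.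
  apply NoDup_incl_length; [apply NoDup_Q|]. intros u Hu.
  destruct (Hcov u) as [c [Huc Cc]]. apply N_spec in Huc.
  apply in_flat_map. exists c. split; [|now apply N_sym].
  apply filter_In. split; [eapply near_Q|]; eauto.
Qed.

(* Disjoint neighbourhoods of the codewords in Q_n are packed into Q_(n+1). *)
Lemma packing_count (C : code) :
  (forall c c' x, C c = true -> C c' = true -> In x (N c) -> In x (N c') -> c = c') ->
  forall n, (k * length (filter C (Q n)) <= length (Q (S n)))%nat.
Proof.
  intros Hpack n. rewrite Nat.mul_comm, <- codeword_nbhds_length.
  apply NoDup_incl_length.
  - apply NoDup_flat_map; [apply NoDup_filter, NoDup_Q | auto |].
    intros c c' x Hc Hc'. apply filter_In in Hc, Hc'. apply Hpack; tauto.
  - intros x Hx. apply in_flat_map in Hx as [c [Hc Hx]]. apply filter_In in Hc.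
    eapply near_Q; [apply Hc | apply N_near, Hx].
Qed.

(* A weight [phi] taking pairwise distinct values mod k on every closed
   neighbourhood; its zero set mod k is a perfect code. *)
Variable phi : vertex -> Z.
Hypothesis N_residues : forall u, NoDup (map (fun w => (phi w mod Z.of_nat k)%Z) (N u)).

Definition residue_code : code := fun w => Z.eqb (phi w mod Z.of_nat k) 0.

Lemma residue_code_covering : covering_code G residue_code.
Proof.
  assert (Hhit : forall u, exists w, In w (N u) /\ residue_code w = true).
  { intros u. destruct (complete_residues_hit_zero phi k (N u)) as [w [Hw Hw0]]; auto.
    exists w. split; [exact Hw | unfold residue_code; now rewrite Hw0]. }
  split.
  - destruct (Hhit (0, 0)%Z) as [w [_ Hw]]. now exists w.
  - intros u. destruct (Hhit u) as [w [Hw Cw]]. exists w. split; [apply N_spec|]; auto.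
Qed.

Lemma residue_code_packing c c' x :
  residue_code c = true -> residue_code c' = true -> In x (N c) -> In x (N c') -> c = c'.
Proof.
  unfold residue_code. rewrite !Z.eqb_eq. intros Hc Hc' Hx Hx'.
  apply (NoDup_map_inj_in _ _ (N_residues x)); try apply N_sym; congruence.
Qed.

Theorem optimal_LLD_density :
  (forall C, local_LD_code G C -> Rbar_le (1 / INR k) (density C)) /\
  (exists C, local_LD_code G C /\ density C = 1 / INR k).
Proof.
  assert (Hlow : forall C, covering_code G C -> Rbar_le (1 / INR k) (density C)).
  { intros C Hcov. apply density_ge_of_count; [exact k_pos|]. now apply covering_count. }
  split.
  - intros C [Hcov _]. now apply Hlow.
  - exists residue_code. split.
    + apply covering_triangle_free_LLD; [now apply parity_triangle_free|].
      apply residue_code_covering.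
    + apply Rbar_le_antisym; [|apply Hlow, residue_code_covering].
      apply density_le_of_count; [exact k_pos|].
      apply packing_count, residue_code_packing.
Qed.

End NeighbourhoodLists.

Ltac solve_pair_disj :=
  simpl; repeat first [left; f_equal; lia | right]; f_equal; lia.

Ltac pair_cases H :=
  simpl in H; repeat destruct H as [H|H]; try contradiction;
  injection H as H1 H2.

Ltac nodup_pairs :=
  repeat constructor; simpl; intros H; repeat destruct H as [H|H];
  try contradiction; injection H; lia.

(* The square grid: N[(i,j)] consists of 5 vertices, on which i + 2j takes
   the values i + 2j + {0, 1, -1, 2, -2}, a complete residue system mod 5. *)
Section SquareGrid.
Local Open Scope Z_scope.

Definition square_nbrs (u : vertex) : list vertex :=
  let (a, b) := u in [(a, b); (a + 1, b); (a - 1, b); (a, b + 1); (a, b - 1)].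

Lemma square_nbrs_spec u w : closed_nbhd square_grid u w <-> In w (square_nbrs u).
Proof.
  destruct u as [a b], w as [c d]; unfold closed_nbhd, square_grid; simpl; split.
  - intros [E|H]; [pair_cases E|pair_cases H]; solve_pair_disj.
  - intros H; pair_cases H; solve_pair_disj.
Qed.

Lemma square_nbrs_nodup u : NoDup (square_nbrs u).
Proof. destruct u as [a b]; nodup_pairs. Qed.

Lemma square_nbrs_length u : length (square_nbrs u) = 5%nat.
Proof. now destruct u. Qed.

Lemma square_nbrs_near u w : In w (square_nbrs u) -> near u w.
Proof. destruct u as [a b], w as [c d]; intros H; pair_cases H; unfold near; simpl; lia. Qed.

Lemma square_grid_sym u v : square_grid u v -> square_grid v u.
Proof.
  destruct u as [a b], v as [c d]; unfold square_grid; simpl; intros H.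
  repeat destruct H as [H|H]; injection H as H1 H2; solve_pair_disj.
Qed.

Lemma square_grid_bipartite u v : square_grid u v -> parity u <> parity v.
Proof.
  destruct u as [a b], v as [c d]; unfold square_grid, parity; simpl; intros H.
  apply parity_unit_step. repeat destruct H as [H|H]; injection H; lia.
Qed.

Lemma square_residues u :
  NoDup (map (fun w => (fst w + 2 * snd w) mod Z.of_nat 5) (square_nbrs u)).
Proof.
  destruct u as [a b].
  replace (map _ _) with (map (fun d => (a + 2 * b + d) mod 5) [0; 1; -1; 2; -2]).
  2: { cbn [map square_nbrs fst snd].
       repeat (f_equal; try (apply (f_equal (fun t => t mod 5)); ring)). }
  apply shifted_residues_nodup; [lia|].
  cbv; repeat constructor; cbn; lia.
Qed.

End SquareGrid.

(* The hexagonal grid: N[(i,j)] consists of 4 vertices, the vertical one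
   being (i, j - s) with s = ±1 determined by the parity of i + j; i + 2j
   takes the values i + 2j + {0, 1, -1, -2s}, a complete residue system
   mod 4. *)
Section HexGrid.
Local Open Scope Z_scope.

Lemma sign_pow_cases t : sign_pow t = 1 \/ sign_pow t = -1.
Proof. unfold sign_pow. destruct (Z.even t); auto. Qed.

(* Moving along the vertical edge flips the sign: the edge is used in both
   directions. *)
Lemma sign_pow_flip t : sign_pow (t - sign_pow t) = - sign_pow t.
Proof.
  unfold sign_pow at 2 3. destruct (Z.even t) eqn:E;
    unfold sign_pow; rewrite Z.even_sub, E; reflexivity.
Qed.

Definition hex_nbrs (u : vertex) : list vertex :=
  let (a, b) := u in [(a, b); (a + 1, b); (a - 1, b); (a, b - sign_pow (a + b + 1))].

Lemma hex_nbrs_spec u w : closed_nbhd hex_grid u w <-> In w (hex_nbrs u).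
Proof.
  destruct u as [a b], w as [c d]; unfold closed_nbhd, hex_grid; simpl; split.
  - intros [E|H]; [pair_cases E|pair_cases H]; solve_pair_disj.
  - intros H; pair_cases H; solve_pair_disj.
Qed.

Lemma hex_nbrs_nodup u : NoDup (hex_nbrs u).
Proof.
  destruct u as [a b]; simpl.
  destruct (sign_pow_cases (a + b + 1)) as [-> | ->]; nodup_pairs.
Qed.

Lemma hex_nbrs_length u : length (hex_nbrs u) = 4%nat.
Proof. now destruct u. Qed.

Lemma hex_nbrs_near u w : In w (hex_nbrs u) -> near u w.
Proof.
  destruct u as [a b], w as [c d]; intros H; pair_cases H; unfold near; simpl;
    destruct (sign_pow_cases (a + b + 1)); lia.
Qed.

Lemma hex_grid_sym u v : hex_grid u v -> hex_grid v u.
Proof.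
  destruct u as [a b], v as [c d]; unfold hex_grid; simpl; intros H.
  repeat destruct H as [H|H]; injection H as H1 H2; [solve_pair_disj | solve_pair_disj |].
  replace c with a by lia. replace d with (b - sign_pow (a + b + 1)) by lia.
  replace (a + (b - sign_pow (a + b + 1)) + 1)
    with (a + b + 1 - sign_pow (a + b + 1)) by ring.
  rewrite sign_pow_flip. right; right. f_equal; ring.
Qed.

Lemma hex_grid_bipartite u v : hex_grid u v -> parity u <> parity v.
Proof.
  destruct u as [a b], v as [c d]; unfold hex_grid, parity; simpl; intros H.
  apply parity_unit_step.
  destruct (sign_pow_cases (a + b + 1)) as [E|E]; rewrite E in H;
    repeat destruct H as [H|H]; injection H; lia.
Qed.

Lemma hex_residues u :
  NoDup (map (fun w => (fst w + 2 * snd w) mod Z.of_nat 4) (hex_nbrs u)).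
Proof.
  destruct u as [a b].
  replace (map _ _) with (map (fun d => (a + 2 * b + d) mod 4)
                              [0; 1; -1; -2 * sign_pow (a + b + 1)]).
  2: { cbn [map hex_nbrs fst snd].
       repeat (f_equal; try (apply (f_equal (fun t => t mod 4)); ring)). }
  apply shifted_residues_nodup; [lia|].
  destruct (sign_pow_cases (a + b + 1)) as [-> | ->]; cbv; repeat constructor; cbn; lia.
Qed.

End HexGrid.

Theorem mainTheorem12 :
  ((forall C : code, local_LD_code square_grid C ->
      Rbar_le (Finite (1/5)) (density C)) /\
   (exists C : code, local_LD_code square_grid C /\ density C = Finite (1/5)))
  /\
  ((forall C : code, local_LD_code hex_grid C ->
      Rbar_le (Finite (1/4)) (density C)) /\
   (exists C : code, local_LD_code hex_grid C /\ density C = Finite (1/4))).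
Proof.
  assert (Hsquare := optimal_LLD_density square_grid square_nbrs 5
    square_nbrs_spec square_nbrs_nodup square_nbrs_length square_nbrs_near
    square_grid_sym ltac:(lia) square_grid_bipartite _ square_residues).
  assert (Hhex := optimal_LLD_density hex_grid hex_nbrs 4
    hex_nbrs_spec hex_nbrs_nodup hex_nbrs_length hex_nbrs_near
    hex_grid_sym ltac:(lia) hex_grid_bipartite _ hex_residues).
  replace (1 / 5) with (1 / INR 5) by (simpl; lra).
  replace (1 / 4) with (1 / INR 4) by (simpl; lra).
  split; assumption.
Qed.
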